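(* Let $\gamma$ be a future-directed timelike curve in $M$. Any two distinct elements $\bar P_i=(I^-[\gamma],P_i^* )$ and $\bar P_j=(I^-[\gamma],P_j^* )$ of $\bar M$ are $T_1$ separated in $(\bar M,\bar{\mathcal T})$: there is a $\bar{\mathcal T}$-open set containing $\bar P_i$ but not $\bar P_j$, and one containing $\bar P_j$ but not $\bar P_i$.
   Context: Let $M$ be a strongly causal spacetime (a time-oriented Lorentzian manifold in which every point has a neighbourhood that no non-spacelike curve enters more than once). $I^\pm(p)$ denotes the chronological future/past of $p\in M$, $I^\pm(S)=\bigcup_{s\in S}I^\pm(s)$, and for a curve $\gamma$ we write $I^\pm[\gamma]=I^\pm(\gamma)$. A past-set is a set $I^-(S)$ with $S\subset M$. An IP is a nonempty past-set that is not the union of two proper subsets which are past-sets. IFs are defined dually. For an IP $P$, $f(P)=I^+(\{x:P\subset I^-(x)\})$. For an IF $P^*$, $p(P^* )=I^-(\{x:P^*\subset I^+(x)\})$. $R_{pf}$ is the set of pairs $(P,Q^* )$ (with $P$ an IP and $Q^*$ an IF) such that both of the following hold: - $Q^*$ is a maximal IF (under inclusion) contained in $f(P)$; - $P$ is a maximal IP contained in $p(Q^* )$. $\bar M$ is the set of pairs $\bar P=(P,P^* )$ such that one of the following holds: - $(P,P^* )\in R_{pf}$; - $P=\emptyset$ and $P^*$ is an IF occurring in no pair of $R_{pf}$; - $P^*=\emptyset$ and $P$ is an IP occurring in no pair of $R_{pf}$. Limits of sets: for past-sets $P_n$ and $Q$, $Q=\lim P_n$ means both of the following: - (i) each $x\in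 Q$ lies in $P_n$ for all sufficiently large $n$; - (ii) for each $x\in M$ with $I^-(x)\not\subset Q$, one has $I^-(x)\not\subset P_n$ for all sufficiently large $n$. Limits of future-sets are defined dually. For $\bar S\subset\bar M$ define: - $L^+_{IF}(\bar S)=\{\bar Q:Q^*\ne\emptyset,\ Q^*\subset\bigcup_{\bar R\in\bar S}R^*\}$; - $L^-_{IP}(\bar S)=\{\bar Q:Q\ne\emptyset,\ Q\subset\bigcup_{\bar R\in\bar S}R\}$; - $Cl_{FB}(\bar S)=\bar S\cup\{\bar Q:Q^*=\emptyset,\ Q=\lim R_n\text{ for some sequence }\bar R_n\in\bar S\}$; - $Cl_{PB}(\bar S)=\bar S\cup\{\bar Q:Q=\emptyset,\ Q^*=\lim R^*_n\text{ for some sequence }\bar R_n\in\bar S\}$; - $L^+(\bar S)=Cl_{FB}[\bar S\cup L^+_{IF}(\bar S)]$; - $L^-(\bar S)=Cl_{PB}[\bar S\cup L^-_{IP}(\bar S)]$. $\bar{\mathcal T}$ is the coarsest topology on $\bar M$ in which $\bar M\setminus L^\pm(\bar S)$ are open for every $\bar S\subset\bar M$. *)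

From HB Require Import structures.
From mathcomp Require Import all_boot all_order all_algebra.
From mathcomp Require Import all_classical all_reals all_analysis.
Set Implicit Arguments. Unset Strict Implicit. Unset Printing Implicit Defensive.
Import Order.TTheory GRing.Theory Num.Theory.
Import numFieldNormedType.Exports.
Local Open Scope classical_set_scope.
Local Open Scope ring_scope.

Section Causal.
Variables (M : topologicalType) (chr : M -> M -> Prop).
(* chr x y  reads  x << y  (y is in the chronological future of x). *)

Definition Ipast (S : set M) : set M := [set x | exists2 s, S s & chr x s].
Definition Ifut (S : set M) : set M := [set x | exists2 s, S s & chr s x].

Definition is_pastset (A : set M) := exists S, A = Ipast S.
Definition is_futset (A : set M) := exists S, A = Ifut S.

Definition is_IP (P : set M) :=
  [/\ is_pastset P, (P !=set0) &
      ~ exists A B, [/\ is_pastset A, is_pastset B, A `<` P, B `<` P & P = A `|` B]].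
Definition is_IF (F : set M) :=
  [/\ is_futset F, (F !=set0) &
      ~ exists A B, [/\ is_futset A, is_futset B, A `<` F, B `<` F & F = A `|` B]].

Definition fP (P : set M) : set M := Ifut [set x | P `<=` Ipast [set x]].
Definition pF (F : set M) : set M := Ipast [set x | F `<=` Ifut [set x]].

Definition maximal_IF_in (Q A : set M) :=
  [/\ is_IF Q, Q `<=` A & forall Q', is_IF Q' -> Q' `<=` A -> Q `<=` Q' -> Q' = Q].
Definition maximal_IP_in (P A : set M) :=
  [/\ is_IP P, P `<=` A & forall P', is_IP P' -> P' `<=` A -> P `<=` P' -> P' = P].

Definition Rpf (P Q : set M) := maximal_IF_in Q (fP P) /\ maximal_IP_in P (pF Q).

Definition in_Mbar (p : set M * set M) :=
  [\/ Rpf p.1 p.2,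
      p.1 = set0 /\ is_IF p.2 /\ ~ (exists P, Rpf P p.2)
    | p.2 = set0 /\ is_IP p.1 /\ ~ (exists Q, Rpf p.1 Q)].

Definition Mbar := {p : set M * set M | in_Mbar p}.
Definition Pof (x : Mbar) : set M := (proj1_sig x).1.
Definition Fof (x : Mbar) : set M := (proj1_sig x).2.

Definition lim_past (Pn : nat -> set M) (Q : set M) :=
  (forall x, Q x -> exists N, forall n, (N <= n)%N -> Pn n x) /\
  (forall x, ~ (Ipast [set x] `<=` Q) ->
     exists N, forall n, (N <= n)%N -> ~ (Ipast [set x] `<=` Pn n)).
Definition lim_fut (Fn : nat -> set M) (Q : set M) :=
  (forall x, Q x -> exists N, forall n, (N <= n)%N -> Fn n x) /\
  (forall x, ~ (Ifut [set x] `<=` Q) ->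
     exists N, forall n, (N <= n)%N -> ~ (Ifut [set x] `<=` Fn n)).

Definition LIF (S : set Mbar) : set Mbar :=
  [set Q | Fof Q !=set0 /\ Fof Q `<=` \bigcup_(R in S) Fof R].
Definition LIP (S : set Mbar) : set Mbar :=
  [set Q | Pof Q !=set0 /\ Pof Q `<=` \bigcup_(R in S) Pof R].

Definition ClFB (S : set Mbar) : set Mbar :=
  S `|` [set Q | Fof Q = set0 /\
         exists Rn : nat -> Mbar, (forall n, S (Rn n)) /\ lim_past (fun n => Pof (Rn n)) (Pof Q)].
Definition ClPB (S : set Mbar) : set Mbar :=
  S `|` [set Q | Pof Q = set0 /\
         exists Rn : nat -> Mbar, (forall n, S (Rn n)) /\ lim_fut (fun n => Fof (Rn n)) (Fof Q)].

Definition Lplus (S : set Mbar) : set Mbar := ClFB (S `|` LIF S).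
Definition Lminus (S : set Mbar) : set Mbar := ClPB (S `|` LIP S).

(* The coarsest topology on Mbar in which all complements of L^+(S), L^-(S)
   are open: the topology generated by these sets as a subbase. *)
Inductive Tbar_open : set Mbar -> Prop :=
  | Tbar_sub_plus S : Tbar_open (~` Lplus S)
  | Tbar_sub_minus S : Tbar_open (~` Lminus S)
  | Tbar_setT : Tbar_open setT
  | Tbar_setI A B : Tbar_open A -> Tbar_open B -> Tbar_open (A `&` B)
  | Tbar_bigcup (F : set (set Mbar)) :
      (forall A, F A -> Tbar_open A) -> Tbar_open (\bigcup_(A in F) A).

End Causal.

(* Strong causality is expressed through its standard equivalent for spacetimes:
   the Alexandrov sets I^+(x) ∩ I^-(y) form a base of the manifold topology. *)
Definition strongly_causal_spacetime (M : topologicalType) (chr : M -> M -> Prop) :=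
  [/\ (forall x y z, chr x y -> chr y z -> chr x z),
      (forall x, ~ chr x x),
      (forall p, open (Ifut chr [set p]) /\ open (Ipast chr [set p])),
      (forall p, (exists x, chr x p) /\ (exists y, chr p y)) &
      (forall p U, nbhs p U ->
         exists x y, [/\ chr x p, chr p y & Ifut chr [set x] `&` Ipast chr [set y] `<=` U])].

Definition fd_timelike_curve (R : realType) (M : topologicalType) (chr : M -> M -> Prop)
  (D : set R) (gam : R -> M) :=
  [/\ is_interval D, (D !=set0), {within D, continuous gam} &
      (forall s t, D s -> D t -> s < t -> chr (gam s) (gam t))].

From HB Require Import structures.
From mathcomp Require Import all_boot all_order all_algebra.
From mathcomp Require Import all_classical all_reals all_analysis.
Set Implicit Arguments. Unset Strict Implicit.
Local Open Scope classical_set_scope.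

(* The common past I^-[gamma] is nonempty, so neither point is of the form
   (emptyset, F); and since one of them has a partner in R_pf, so has the
   other, i.e. both are R_pf pairs (P, F_i), (P, F_j) with F_i, F_j distinct
   maximal IFs of f(P).  Then F_i is not contained in F_j, which is exactly
   what keeps (P, F_i) out of L^+({(P, F_j)}); the complement of that set is
   the required open neighbourhood, and symmetrically for the other point. *)

Section MbarSeparation.
Variables (M : topologicalType) (chr : M -> M -> Prop).

Lemma Mbar_ext (x y : Mbar chr) : Pof x = Pof y -> Fof x = Fof y -> x = y.
Proof.
case: x => [[a b] hx]; case: y => [[c d] hy]; rewrite /Pof /Fof /= => ac bd; subst c d.
by congr exist; exact: Prop_irrelevance.
Qed.

Lemma Ipast_neq0 (S : set M) :
  (forall p, exists x, chr x p) -> S !=set0 -> Ipast chr S !=set0.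
Proof. by move=> past [s Ss]; have [x xs] := past s; exists x, s. Qed.

Lemma maximal_IF_in_subset (Q Q' A : set M) :
  maximal_IF_in chr Q A -> is_IF chr Q' -> Q' `<=` A -> Q `<=` Q' -> Q' = Q.
Proof. by case=> _ _ maxQ IFQ' Q'A QQ'; exact: maxQ. Qed.

Lemma Mbar_cases_past_neq0 (X : Mbar chr) : Pof X !=set0 ->
  Rpf chr (Pof X) (Fof X) \/ (Fof X = set0 /\ ~ exists Q, Rpf chr (Pof X) Q).
Proof.
case: X => [[P F] /= hX]; rewrite /Pof /Fof /= => -[z Pz].
case: hX => /= [RPF|[P0 _]|[F0 [_ noQ]]].
- by left.
- by rewrite P0 in Pz.
- by right.
Qed.

Lemma Mbar_same_past_Rpf (X Y : Mbar chr) :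
  Pof X = Pof Y -> Pof X !=set0 -> X <> Y -> Rpf chr (Pof X) (Fof X).
Proof.
move=> EP P0 XY; have P0' : Pof Y !=set0 by rewrite -EP.
case: (Mbar_cases_past_neq0 P0) => [//|[FX0 noQX]].
case: (Mbar_cases_past_neq0 P0') => [RY|[FY0 _]].
- by exfalso; apply: noQX; exists (Fof Y); rewrite EP.
- by exfalso; apply: XY; apply: Mbar_ext; rewrite ?FX0 ?FY0.
Qed.

Lemma Lplus_sub (S : set (Mbar chr)) : S `<=` Lplus S.
Proof. by move=> x Sx; left; left. Qed.

Lemma maximal_IF_notin_Lplus1 (X Y : Mbar chr) (A : set M) :
  maximal_IF_in chr (Fof X) A -> is_IF chr (Fof Y) -> Fof Y `<=` A ->
  Fof X <> Fof Y -> ~ Lplus [set Y] X.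
Proof.
move=> maxX IFY FYA FXY [[XY|[_ FXsub]]|[FX0 _]].
- by apply: FXY; rewrite XY.
- have FXY' : Fof X `<=` Fof Y by move=> z /FXsub [R -> Fz].
  by apply: FXY; apply/esym; exact: (maximal_IF_in_subset maxX IFY FYA FXY').
- by case: maxX => -[_ [z Fz] _] _ _; rewrite FX0 in Fz.
Qed.

Lemma Rpf_T1_separation (X Y : Mbar chr) :
  Rpf chr (Pof X) (Fof X) -> Rpf chr (Pof Y) (Fof Y) ->
  Pof X = Pof Y -> X <> Y ->
  exists U, [/\ Tbar_open U, U X & ~ U Y].
Proof.
move=> RX RY EP XY; exists (~` Lplus [set Y]); split.
- exact: Tbar_sub_plus.
- case: RX => maxX _; case: RY => -[IFY FYA _] _; rewrite EP in maxX.
  by apply: (maximal_IF_notin_Lplus1 maxX IFY FYA) => FXY; apply: XY; exact: Mbar_ext.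
- by apply; exact: Lplus_sub.
Qed.

End MbarSeparation.

Theorem theorem11 (R : realType) (M : topologicalType) (chr : M -> M -> Prop)
  (HM : strongly_causal_spacetime chr) (D : set R) (gam : R -> M)
  (Hgam : fd_timelike_curve chr D gam) (Pi Pj : Mbar chr) :
  Pof Pi = Ipast chr (gam @` D) -> Pof Pj = Ipast chr (gam @` D) -> Pi <> Pj ->
  (exists U, [/\ Tbar_open U, U Pi & ~ U Pj]) /\
  (exists U, [/\ Tbar_open U, U Pj & ~ U Pi]).
Proof.
move=> Ei Ej PiPj.
have past_gam_neq0 : Ipast chr (gam @` D) !=set0.
  case: HM => _ _ _ past_fut _; case: Hgam => _ [t Dt] _ _.
  apply: Ipast_neq0 => [p|]; first by have [] := past_fut p.
  by exists (gam t), t.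
have EP : Pof Pi = Pof Pj by rewrite Ei Ej.
have Ri : Rpf chr (Pof Pi) (Fof Pi).
  by apply: (Mbar_same_past_Rpf EP _ PiPj); rewrite Ei.
have Rj : Rpf chr (Pof Pj) (Fof Pj).
  by apply: (Mbar_same_past_Rpf (esym EP) _ (nesym PiPj)); rewrite Ej.
split; first exact: (@Rpf_T1_separation _ _ Pi Pj Ri Rj EP PiPj).
exact: (@Rpf_T1_separation _ _ Pj Pi Rj Ri (esym EP) (nesym PiPj)).
Qed.
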